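(* For any graph $G=(V,E)$ and any ordering of its edges, the output $P$ of the port-based greedy procedure (Algorithm 1) described in the context is a collection of vertex-disjoint paths.
   Context: Algorithm 1: initialize $P\gets\emptyset$. Each vertex $v$ has two ports $v^0,v^1$, initially free. Iterate over the edges of $G$ in the given ordering; upon visiting $e=(u,v)$: if $v^0$ and $u^0$ are free, add $e$ to $P$ and mark $v^0,u^0$ occupied; else if $v^1$ and $u^0$ are free, add $e$ to $P$ and mark $v^1,u^0$ occupied; else if $v^0$ and $u^1$ are free, add $e$ to $P$ and mark $v^0,u^1$ occupied; otherwise skip $e$. Return $P$. *)

From mathcomp Require Import all_boot.
Set Implicit Arguments. Unset Strict Implicit. Unset Printing Implicit Defensive.

Section Greedy.
Variable V : finType.

(* A simple graph on V given by an ordering of its edges: a sequence of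
   (oriented, as written in the ordering) pairs (u,v), with no loops and
   no edge listed twice (in either orientation). *)
Definition simple_edge_seq (s : seq (V * V)) : Prop :=
  all (fun e => e.1 != e.2) s /\ uniq [seq [set e.1; e.2] | e <- s].

(* Ports: (x, false) is port x^0, (x, true) is port x^1.
   State: (P, set of occupied ports). *)
Definition greedy_step (st : seq (V * V) * {set (V * bool)%type}) (e : V * V) :=
  let P := st.1 in let O := st.2 in
  let u := e.1 in let v := e.2 in
  if ((v, false) \notin O) && ((u, false) \notin O) then
    (rcons P e, (v, false) |: ((u, false) |: O))
  else if ((v, true) \notin O) && ((u, false) \notin O) then
    (rcons P e, (v, true) |: ((u, false) |: O))
  else if ((v, false) \notin O) && ((u, true) \notin O) then
    (rcons P e, (v, false) |: ((u, true) |: O))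
  else st.

Definition greedy_paths (s : seq (V * V)) : seq (V * V) :=
  (foldl greedy_step ([::], set0) s).1.

Definition adj (P : seq (V * V)) : rel V :=
  fun x y => ((x, y) \in P) || ((y, x) \in P).

Definition degree (P : seq (V * V)) (x : V) : nat :=
  count (fun e => (e.1 == x) || (e.2 == x)) P.

Definition has_cycle (P : seq (V * V)) : Prop :=
  exists c : seq V, [/\ 3 <= size c, uniq c & cycle (adj P) c].

Definition vertex_disjoint_paths (P : seq (V * V)) : Prop :=
  (forall x, degree P x <= 2) /\ ~ has_cycle P.

End Greedy.

From mathcomp Require Import all_boot.
Set Implicit Arguments. Unset Strict Implicit. Unset Printing Implicit Defensive.

(* The number of edges of P at a vertex x always equals the number of occupied
   ports of x, and port x^1 is only ever occupied after x^0; hence degrees are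
   at most 2.  Every accepted edge occupies port 0 of at least one endpoint, so
   that endpoint was isolated before; an edge at an isolated vertex w cannot
   close a cycle, because on a cycle w would need two distinct neighbours. *)

Lemma uniq_cycle_neighbours (T : eqType) (r : rel T) (c : seq T) x :
  uniq c -> 3 <= size c -> cycle r c -> x \in c ->
  exists y z, [/\ y != z, r x y & r z x].
Proof.
move=> uc szc cc /rot_to[i c' rot_c].
have : cycle r (x :: c') by rewrite -rot_c rot_cycle.
have : uniq (x :: c') by rewrite -rot_c rot_uniq.
have : 2 <= size c' by move: szc; rewrite -(size_rot i) rot_c.
case: c' {rot_c} => [|y [|z c']] // _.
rewrite cons_uniq => /and3P[_ y_notin _].
rewrite /= rcons_path => /and3P[rxy _ /andP[_ r_last_x]].
exists y, (last z c'); split => //.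
by apply: contraNneq y_notin => ->; apply: mem_last.
Qed.

Section LinearForest.
Variable V : finType.
Implicit Types (P : seq (V * V)) (e : V * V) (x y w o : V).

Lemma adjC P x y : adj P x y = adj P y x.
Proof. by rewrite /adj orbC. Qed.

Lemma adj_rcons P e x y :
  adj (rcons P e) x y = [|| e == (x, y), e == (y, x) | adj P x y].
Proof.
rewrite /adj !mem_rcons !in_cons !(eq_sym e) -!orbA.
by congr (_ || _); apply: orbCA.
Qed.

Lemma eq_has_cycle P1 P2 : adj P1 =2 adj P2 -> has_cycle P1 <-> has_cycle P2.
Proof.
move=> eq_adj; split=> -[c [szc uc cc]]; exists c.
  by rewrite -(eq_cycle eq_adj).
by rewrite (eq_cycle eq_adj).
Qed.

Lemma degree_rcons P e x :
  degree (rcons P e) x = degree P x + ((x == e.1) || (x == e.2)).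
Proof. by rewrite /degree -cats1 count_cat /= addn0 !(eq_sym x). Qed.

Lemma degree_eq0_adj P w y : degree P w = 0 -> adj P w y = false.
Proof.
move/eqP; rewrite -leqn0 leqNgt -has_count => /hasPn no_edge.
by apply/norP; split; apply/negP => /no_edge /=; rewrite eqxx ?orbT.
Qed.

Lemma has_cycle_rcons_pendant P w o :
  w != o -> degree P w = 0 -> ~ has_cycle P -> ~ has_cycle (rcons P (w, o)).
Proof.
move=> w_neq_o deg_w acyclic [c [szc uc cc]].
have only_o y : adj (rcons P (w, o)) w y -> y = o.
  rewrite adj_rcons degree_eq0_adj // orbF !xpair_eqE eqxx /=.
  case/orP => [/eqP // | /andP[_ /eqP o_eq_w]].
  by rewrite o_eq_w eqxx in w_neq_o.
have [w_in_c | w_notin_c] := boolP (w \in c).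
  have [y [z [y_neq_z /only_o y_eq_o]]] :=
    uniq_cycle_neighbours uc szc cc w_in_c.
  by rewrite adjC => /only_o z_eq_o; rewrite y_eq_o z_eq_o eqxx in y_neq_z.
apply: acyclic; exists c; split => //.
apply: (sub_in_cycle (P := predC1 w)) cc; last first.
  by apply/allP => x x_in_c; apply: contraNneq w_notin_c => <-.
move=> a b /= /negbTE a_neq_w /negbTE b_neq_w.
by rewrite adj_rcons !xpair_eqE !(eq_sym w) a_neq_w b_neq_w.
Qed.

Definition ports_used (O : {set V * bool}) x : nat :=
  ((x, false) \in O) + ((x, true) \in O).

Definition port_invariant (st : seq (V * V) * {set V * bool}) : Prop :=
  [/\ forall x, degree st.1 x = ports_used st.2 x,
      forall x, (x, true) \in st.2 -> (x, false) \in st.2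
    & ~ has_cycle st.1].

Lemma ports_used_occupy (O : {set V * bool}) u v bu bv x :
  u != v -> (u, bu) \notin O -> (v, bv) \notin O ->
  ports_used ((v, bv) |: ((u, bu) |: O)) x =
  ports_used O x + ((x == u) || (x == v)).
Proof.
move=> u_neq_v /negbTE u_free /negbTE v_free.
rewrite /ports_used !in_setU1 !xpair_eqE.
have [-> | _] := eqVneq x v.
  rewrite orbT [v == u]eq_sym (negbTE u_neq_v).
  by case: bv v_free => -> /=; rewrite ?addn0 // addnC.
rewrite orbF; have [-> | _] := eqVneq x u; last by rewrite addn0.
by case: bu u_free => -> /=; rewrite ?addn0 // addnC.
Qed.

Lemma port_invariant_occupy P (O : {set V * bool}) u v bu bv :
  u != v -> (u, bu) \notin O -> (v, bv) \notin O ->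
  (bu -> (u, false) \in O) -> (bv -> (v, false) \in O) -> ~~ (bu && bv) ->
  port_invariant (P, O) ->
  port_invariant (rcons P (u, v), (v, bv) |: ((u, bu) |: O)).
Proof.
move=> u_neq_v u_free v_free u_port0 v_port0 port0_used [/= deg ports acyclic].
have isolated x : (x, false) \notin O -> degree P x = 0.
  move=> x_free; rewrite deg /ports_used (negbTE x_free).
  by case: (boolP ((x, true) \in O)) => // /ports; rewrite (negbTE x_free).
split=> /=.
- by move=> x; rewrite degree_rcons ports_used_occupy // deg.
- move=> x; rewrite !in_setU1 !xpair_eqE /= => x_port1.
  suff -> : (x, false) \in O by rewrite !orbT.
  case/or3P: x_port1 => [/andP[/eqP-> /eqP bv1] | /andP[/eqP-> /eqP bu1] | ].
  + by apply: v_port0; rewrite -bv1.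
  + by apply: u_port0; rewrite -bu1.
  + exact: ports.
- case: bu u_free u_port0 port0_used => [u_free _ /= nbv | u_free _ _];
    last by apply: has_cycle_rcons_pendant; rewrite ?isolated.
  rewrite (negbTE nbv) in v_free.
  have swap : adj (rcons P (v, u)) =2 adj (rcons P (u, v)).
    by move=> x y; rewrite !adj_rcons !xpair_eqE orbCA !(andbC (u == _)).
  move=> /(eq_has_cycle swap).
  by apply: has_cycle_rcons_pendant; rewrite 1?eq_sym ?isolated.
Qed.

Lemma port_invariant0 : port_invariant ([::], set0).
Proof.
split=> [x | x | [c [szc _ cc]]] /=; rewrite /ports_used ?in_set0 //.
by case: c szc cc => [|x [|y [|z c]]].
Qed.

Lemma port_invariant_greedy_step st e :
  e.1 != e.2 -> port_invariant st -> port_invariant (greedy_step st e).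
Proof.
case: st e => P O [u v] /= u_neq_v inv; rewrite /greedy_step /=.
case: ifP => [/andP[v0_free u0_free] | ports0_taken].
  exact: port_invariant_occupy.
case: ifP => [/andP[v1_free u0_free] | _].
  have v0_used : (v, false) \in O.
    by move: ports0_taken; rewrite u0_free andbT => /negbFE.
  exact: port_invariant_occupy.
case: ifP => [/andP[v0_free u1_free] | _] //.
have u0_used : (u, false) \in O.
  by move: ports0_taken; rewrite v0_free => /negbFE.
exact: port_invariant_occupy.
Qed.

Lemma port_invariant_foldl s st :
  all (fun e => e.1 != e.2) s -> port_invariant st ->
  port_invariant (foldl (@greedy_step V) st s).
Proof.
elim: s st => //= e s IH st /andP[e_proper s_proper] inv.
exact/IH/port_invariant_greedy_step.
Qed.

End LinearForest.

Theorem claim4p1 (V : finType) (s : seq (V * V)) :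
  simple_edge_seq s -> vertex_disjoint_paths (greedy_paths s).
Proof.
case=> proper _.
have [deg _ acyclic] := port_invariant_foldl proper (port_invariant0 V).
by split=> // x; rewrite deg; apply: leq_add (leq_b1 _) (leq_b1 _).
Qed.
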